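(* Let $\tau\in[0,1]$ and let $e$ be a Gaussian random vector in $\mathbb{R}^n$ with mean $m_e$ and positive semidefinite covariance $K_e$. Then: (i) $\mathcal{H}_\tau(e,\lambda)\ge0$, with equality if and only if $e=0$ (i.e. $m_e=0$ and $K_e=0$); (ii) $\lambda\mapsto\mathcal{H}_\tau(e,\lambda)$ is a monotone decreasing function.
   Context: The $\tau$ entropy is defined, for $\lambda>0$ with $\lambda>(1-\tau)\|K_e\|$ ($\|\cdot\|$ the spectral norm), by $\mathcal{H}_0(e,\lambda)=m_e^T(I_n-\frac1\lambda K_e)^{-1}m_e-\lambda\log\det(I_n-\frac1\lambda K_e)$; for $0<\tau<1$, $\mathcal{H}_\tau(e,\lambda)=m_e^T(I_n-\frac{1-\tau}\lambda K_e)^{-1}m_e+\frac\lambda\tau\mathrm{tr}\big((I_n-\frac{1-\tau}\lambda K_e)^{\frac\tau{\tau-1}}-I_n\big)$; $\mathcal{H}_1(e,\lambda)=m_e^Tm_e+\lambda\,\mathrm{tr}(\exp(\frac1\lambda K_e)-I_n)$; and $\mathcal{H}_\tau(e,\lambda)=\infty$ for other $\lambda$. *)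

From HB Require Import structures.
From mathcomp Require Import all_boot all_order all_algebra.
From mathcomp Require Import all_classical all_reals all_analysis.
Set Implicit Arguments. Unset Strict Implicit. Unset Printing Implicit Defensive.
Import Order.TTheory GRing.Theory Num.Theory.
Local Open Scope ring_scope.
Local Open Scope classical_set_scope.

Section TauEntropy.
Variables (R : realType) (n : nat).

Definition qform (A : 'M[R]_n) (v : 'cV[R]_n) : R := (v^T *m A *m v) 0 0.

Definition psd (A : 'M[R]_n) : Prop :=
  A^T = A /\ forall v : 'cV[R]_n, 0 <= qform A v.

Definition specnorm (A : 'M[R]_n) : R :=
  sup [set Num.sqrt (qform (A^T *m A) x) | x in [set x : 'cV[R]_n | qform 1%:M x = 1]].

Definition spec_decomp (A : 'M[R]_n) (Ud : 'M[R]_n * 'rV[R]_n) : Prop :=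
  Ud.1^T *m Ud.1 = 1%:M /\ A = Ud.1 *m diag_mx Ud.2 *m Ud.1^T.

Definition mxfun (f : R -> R) (A : 'M[R]_n) : 'M[R]_n :=
  match pselect (exists Ud, spec_decomp A Ud) with
  | left h => let Ud := projT1 (cid h) in
              Ud.1 *m diag_mx (map_mx f Ud.2) *m Ud.1^T
  | right _ => A
  end.

Definition Hfin (tau : R) (m : 'cV[R]_n) (K : 'M[R]_n) (lam : R) : R :=
  if tau == 0 then
    qform (invmx (1%:M - lam^-1 *: K)) m - lam * ln (\det (1%:M - lam^-1 *: K))
  else if tau == 1 then
    qform 1%:M m + lam * \tr (mxfun expR (lam^-1 *: K) - 1%:M)
  else
    qform (invmx (1%:M - ((1 - tau) / lam) *: K)) m
    + lam / tau * \tr (mxfun (fun x => x `^ (tau / (tau - 1)))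
                              (1%:M - ((1 - tau) / lam) *: K) - 1%:M).

(* the tau entropy H_tau(e, lambda) of a Gaussian vector e with mean m and
   covariance K, with value +oo outside lambda > 0, lambda > (1-tau)||K|| *)
Definition Htau (tau : R) (m : 'cV[R]_n) (K : 'M[R]_n) (lam : R) : \bar R :=
  if (0 < lam) && ((1 - tau) * specnorm K < lam) then (Hfin tau m K lam)%:E
  else +oo%E.

End TauEntropy.

From HB Require Import structures.
From mathcomp Require Import all_boot all_order all_algebra.
From mathcomp Require Import all_classical all_reals all_analysis.
From mathcomp Require Import ring lra.
From mathcomp Require Import complex spectral sesquilinear.
Set Implicit Arguments. Unset Strict Implicit. Unset Printing Implicit Defensive.
Import Order.TTheory GRing.Theory Num.Theory.
Local Open Scope ring_scope.
Local Open Scope classical_set_scope.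

(* Diagonalise K = U diag(d) U^T orthogonally, with d >= 0 since K is psd, and put
   y = U^T m. In this eigenbasis every matrix function in H_tau acts on the
   eigenvalues, and H_tau(e, lam) = sum_j [y_j^2 / (1 - (1-tau) d_j/lam) + lam phi_tau(d_j/lam)]
   where phi_tau(s) is -ln(1-s), ((1-(1-tau)s)^(tau/(tau-1)) - 1)/tau or e^s - 1 according
   as tau = 0, 0 < tau < 1 or tau = 1. Each phi_tau is nonnegative, vanishes only at 0 and
   is star-shaped, phi(t s) <= t phi(s) for t in [0,1] (concavity of ln, convexity of exp).
   Star-shapedness makes the perspective lam phi(d/lam) nonincreasing in lam; the first
   term is nonincreasing too, and positivity and the equality case hold termwise. *)

Section Scalar.
Variable R : realType.
Implicit Types (tau s t x lam : R).

Lemma ln_convex_comb t x : 0 <= t <= 1 -> 0 < x -> t * ln x <= ln (t * x + (1 - t)).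
Proof.
move=> /andP[t0 t1] x0; have := @concave_ln R (Itv01 t0 t1) x 1 x0 ltr01.
by rewrite !convRE /= ln1 mulr0 addr0 mulr1.
Qed.

Lemma expR_convex_comb t x : 0 <= t <= 1 -> expR (t * x) <= t * expR x + (1 - t).
Proof.
move=> /andP[t0 t1]; have := @convex_expR R (Itv01 t0 t1) x 0.
by rewrite !convRE /= expR0 mulr0 addr0 mulr1.
Qed.

Lemma perspective_antitone (f : R -> R) x l1 l2 :
  (forall t, 0 <= t <= 1 -> f (t * (x / l1)) <= t * f (x / l1)) ->
  0 < l1 -> l1 <= l2 -> l2 * f (x / l2) <= l1 * f (x / l1).
Proof.
move=> fstar l10 l12; have l20 := lt_le_trans l10 l12.
have t01 : 0 <= l1 / l2 <= 1.
  by rewrite divr_ge0 ?(ltW l10) ?(ltW l20) //= ler_pdivrMr // mul1r.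
have -> : x / l2 = l1 / l2 * (x / l1) by field; rewrite !gt_eqF.
apply: le_trans (ler_wpM2l (ltW l20) (fstar _ t01)) _.
by rewrite mulrA mulrCA divff ?gt_eqF // mulr1.
Qed.

Definition tau_phi tau s : R :=
  if tau == 0 then - ln (1 - s)
  else if tau == 1 then expR s - 1
  else ((1 - (1 - tau) * s) `^ (tau / (tau - 1)) - 1) / tau.

Lemma tau_phi0 tau : tau_phi tau 0 = 0.
Proof.
by rewrite /tau_phi mulr0 subr0 ln1 oppr0 expR0 powR1 subrr mul0r !if_same.
Qed.

Section TauPhi.
Variables tau s : R.
Hypotheses (tau_ge0 : 0 <= tau) (tau_le1 : tau <= 1) (s_ge0 : 0 <= s).
Hypothesis dom : (1 - tau) * s < 1.

Let g := 1 - (1 - tau) * s.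
Let p := tau / (tau - 1).

Let g_gt0 : 0 < g. Proof. by rewrite subr_gt0. Qed.
Let g_le1 : g <= 1. Proof. by rewrite gerBl mulr_ge0 // subr_ge0. Qed.

Let tau_mid : tau != 0 -> tau != 1 -> 0 < tau < 1.
Proof. by move=> t0 t1; rewrite !lt_neqAle tau_ge0 tau_le1 eq_sym t0 t1. Qed.

Let p_le0 : tau < 1 -> p <= 0.
Proof. by move=> t1; rewrite mulr_ge0_le0 // invr_le0 subr_le0 ltW. Qed.

Lemma tau_phi_ge0 : 0 <= tau_phi tau s.
Proof.
rewrite /tau_phi; case: (eqVneq tau 0) => [_|t0].
  by rewrite oppr_ge0 ln_le0 // gerBl.
case: (eqVneq tau 1) => [_|t1].
  by rewrite subr_ge0 (le_trans _ (expR_ge1Dx s)) // lerDl.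
have /andP[tau_gt0 tau_lt1] := tau_mid t0 t1.
rewrite divr_ge0 ?(ltW tau_gt0) // subr_ge0 /powR gt_eqF // -/p.
by rewrite (le_trans _ (expR_ge1Dx _)) // lerDl mulr_le0 ?p_le0 ?ln_le0.
Qed.

Lemma tau_phi_eq0 : tau_phi tau s = 0 -> s = 0.
Proof.
rewrite /tau_phi; case: (eqVneq tau 0) => [t0|t0].
  move/eqP; rewrite oppr_eq0 ln_eq0; last by move: g_gt0; rewrite /g t0 subr0 mul1r.
  by move=> /eqP; lra.
case: (eqVneq tau 1) => [_|t1].
  by move/eqP; rewrite subr_eq0 => /eqP/(congr1 (@ln R)); rewrite expRK ln1.
have /andP[tau_gt0 tau_lt1] := tau_mid t0 t1.
move/eqP; rewrite mulf_eq0 invr_eq0 (gt_eqF tau_gt0) orbF subr_eq0 /powR -/g (gt_eqF g_gt0).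
move=> /eqP/(congr1 (@ln R)); rewrite expRK ln1 => /eqP; rewrite mulf_eq0 -/p.
rewrite mulf_eq0 invr_eq0 (gt_eqF tau_gt0) (lt_eqF (_ : tau - 1 < 0)) ?subr_lt0 //=.
rewrite ln_eq0 // => /eqP g1.
have /eqP : (1 - tau) * s = 0 by move: g1; rewrite /g; lra.
by rewrite mulf_eq0 subr_eq0 eq_sym (lt_eqF tau_lt1) => /eqP.
Qed.

Lemma tau_phi_star t : 0 <= t <= 1 -> tau_phi tau (t * s) <= t * tau_phi tau s.
Proof.
move=> t01; have /andP[t0 t1] := t01.
have comb : 1 - (1 - tau) * (t * s) = t * g + (1 - t) by rewrite /g; ring.
have gt_gt0 : 0 < t * g + (1 - t) by have := g_gt0; have := g_le1; nra.
rewrite /tau_phi; case: (eqVneq tau 0) => [tau0|tau0].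
  move: comb g_gt0; rewrite /g tau0 subr0 !mul1r => -> s_lt1.
  by rewrite mulrN lerN2 ln_convex_comb.
case: (eqVneq tau 1) => [_|tau1].
  by have := expR_convex_comb s t01; lra.
have /andP[tau_gt0 tau_lt1] := tau_mid tau0 tau1.
rewrite mulrA ler_pM2r ?invr_gt0 // comb -/p.
suff : (t * g + (1 - t)) `^ p <= t * g `^ p + (1 - t) by lra.
rewrite /powR !gt_eqF //.
apply: le_trans (expR_convex_comb _ t01); rewrite ler_expR mulrCA.
by apply: ler_wnM2l; [exact: p_le0 | exact: ln_convex_comb].
Qed.

End TauPhi.

Definition tau_term tau d lam y : R :=
  (1 - (1 - tau) * (d / lam))^-1 * y ^+ 2 + lam * tau_phi tau (d / lam).

Lemma tau_term0 tau lam : tau_term tau 0 lam 0 = 0.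
Proof. by rewrite /tau_term mul0r tau_phi0 expr0n /= !mulr0 addr0. Qed.

Section TauTerm.
Variables tau d : R.
Hypotheses (tau_ge0 : 0 <= tau) (tau_le1 : tau <= 1) (d_ge0 : 0 <= d).

Let ratio_ge0 lam : 0 < lam -> 0 <= d / lam.
Proof. by move=> lam_gt0; rewrite divr_ge0 // ltW. Qed.

Let ratio_dom lam : 0 < lam -> (1 - tau) * d < lam -> (1 - tau) * (d / lam) < 1.
Proof. by move=> lam_gt0 dom; rewrite mulrA ltr_pdivrMr // mul1r. Qed.

Lemma tau_term_ge0 lam y : 0 < lam -> (1 - tau) * d < lam -> 0 <= tau_term tau d lam y.
Proof.
move=> lam_gt0 dom; apply: addr_ge0; apply: mulr_ge0.
- by rewrite invr_ge0 subr_ge0 ltW ?ratio_dom.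
- exact: sqr_ge0.
- exact: ltW.
- by rewrite tau_phi_ge0 ?ratio_ge0 ?ratio_dom.
Qed.

Lemma tau_term_eq0 lam y : 0 < lam -> (1 - tau) * d < lam ->
  tau_term tau d lam y = 0 -> d = 0 /\ y = 0.
Proof.
move=> lam_gt0 dom /eqP; have := ratio_dom lam_gt0 dom; rewrite -subr_gt0 => g_gt0.
have phi_ge0 : 0 <= tau_phi tau (d / lam) by rewrite tau_phi_ge0 ?ratio_ge0 ?ratio_dom.
rewrite paddr_eq0 ?(mulr_ge0 (ltW lam_gt0) phi_ge0) //; last first.
  by rewrite mulr_ge0 ?sqr_ge0 // invr_ge0 ltW.
rewrite mulf_eq0 invr_eq0 (gt_eqF g_gt0) sqrf_eq0 mulf_eq0 (gt_eqF lam_gt0) /=.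
move=> /andP[/eqP y0 /eqP phi0].
split=> //; have /eqP : d / lam = 0 by apply: tau_phi_eq0 phi0; rewrite ?ratio_dom.
by rewrite mulf_eq0 invr_eq0 (gt_eqF lam_gt0) orbF => /eqP.
Qed.

Lemma tau_term_antitone l1 l2 y : 0 < l1 -> l1 <= l2 -> (1 - tau) * d < l1 ->
  tau_term tau d l2 y <= tau_term tau d l1 y.
Proof.
move=> l1_gt0 l12 dom; have l2_gt0 := lt_le_trans l1_gt0 l12.
have ratio_le : d / l2 <= d / l1 by rewrite ler_wpM2l // lef_pV2 ?posrE.
have dom2 : (1 - tau) * d < l2 := lt_le_trans dom l12.
rewrite lerD // ?ler_wpM2r ?sqr_ge0 //.
  by rewrite lef_pV2 ?posrE ?subr_gt0 ?ratio_dom // lerB // ler_wpM2l // subr_ge0.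
apply: perspective_antitone => // t t01.
by rewrite tau_phi_star ?ratio_ge0 ?ratio_dom.
Qed.

End TauTerm.
End Scalar.

Section Orthodiag.
Variables (R : realType) (n : nat) (U : 'M[R]_n).
Hypothesis UU : U^T *m U = 1%:M.

Let UUt : U *m U^T = 1%:M. Proof. exact: mulmx1C. Qed.

Lemma qform_orthodiag (g : 'rV[R]_n) x :
  qform (U *m diag_mx g *m U^T) x = \sum_j g 0 j * ((U^T *m x) j 0) ^+ 2.
Proof.
rewrite /qform; have -> : x^T *m (U *m diag_mx g *m U^T) *m x =
    (U^T *m x)^T *m diag_mx g *m (U^T *m x).
  by rewrite trmx_mul trmxK !mulmxA.
by rewrite mxE; apply: eq_bigr => j _; rewrite mul_mx_diag !mxE; ring.
Qed.

Lemma orthodiag_affine a k (g : 'rV[R]_n) :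
  a%:M + k *: (U *m diag_mx g *m U^T) = U *m diag_mx (\row_j (a + k * g 0 j)) *m U^T.
Proof.
have -> : diag_mx (\row_j (a + k * g 0 j)) = a%:M + k *: diag_mx g.
  apply/matrixP => i j; rewrite !mxE; case: (eqVneq i j) => [->|ne].
    by rewrite !mulr1n.
  by rewrite !mulr0n mulr0 addr0.
by rewrite mulmxDr mulmxDl mul_mx_scalar -scalemxAl UUt scalemx1 -!scalemxAr -scalemxAl.
Qed.

Lemma orthodiag1 : 1%:M = U *m diag_mx (const_mx 1) *m U^T.
Proof.
rewrite -[1%:M]addr0 -(scale0r (U *m diag_mx 0 *m U^T)) orthodiag_affine.
by congr (_ *m diag_mx _ *m _); apply/rowP => j; rewrite !mxE mul0r addr0.
Qed.

Lemma orthodiag_scale k (g : 'rV[R]_n) :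
  k *: (U *m diag_mx g *m U^T) = U *m diag_mx (\row_j (k * g 0 j)) *m U^T.
Proof.
have -> : diag_mx (\row_j (k * g 0 j)) = k *: diag_mx g.
  by apply/matrixP => i j; rewrite !mxE mulrnAr.
by rewrite -scalemxAr -scalemxAl.
Qed.

Lemma invmx_orthodiag (g : 'rV[R]_n) : (forall j, g 0 j != 0) ->
  invmx (U *m diag_mx g *m U^T) = U *m diag_mx (\row_j (g 0 j)^-1) *m U^T.
Proof.
move=> g_neq0.
have diagV : diag_mx g *m diag_mx (\row_j (g 0 j)^-1) = 1%:M.
  apply/matrixP => i j; rewrite mul_mx_diag !mxE; case: (eqVneq i j) => [->|ne].
    by rewrite !mulr1n mulfV.
  by rewrite !mulr0n mul0r.
have inv : U *m diag_mx g *m U^T *m (U *m diag_mx (\row_j (g 0 j)^-1) *m U^T) = 1%:M.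
  rewrite !mulmxA -(mulmxA _ U^T U) UU mulmx1 -(mulmxA _ (diag_mx g)) diagV.
  by rewrite mulmx1.
have [unitA _] := mulmx1_unit inv.
by rewrite -[LHS]mulmx1 -inv (mulmxA (invmx _)) mulVmx // mul1mx.
Qed.

Lemma det_orthodiag (g : 'rV[R]_n) : \det (U *m diag_mx g *m U^T) = \prod_j g 0 j.
Proof. by rewrite !det_mulmx det_diag mulrAC -det_mulmx UUt det1 mul1r. Qed.

Lemma char_poly_orthodiag (g : 'rV[R]_n) :
  char_poly (U *m diag_mx g *m U^T) = \prod_(i < n) ('X - (g 0 i)%:P).
Proof.
set Up := map_mx polyC U.
have UpUp : Up *m Up^T = 1%:M by rewrite /Up map_trmx -map_mxM UUt map_mx1.
have cA : char_poly_mx (U *m diag_mx g *m U^T) = Up *m char_poly_mx (diag_mx g) *m Up^T.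
  rewrite /char_poly_mx mulmxBr mulmxBl mul_mx_scalar -scalemxAl UpUp scalemx1.
  by rewrite !map_mxM /Up map_trmx.
rewrite /char_poly cA !det_mulmx mulrAC -det_mulmx UpUp det1 mul1r.
rewrite -/(char_poly _) char_poly_trig ?diag_mx_is_trig //.
by apply: eq_bigr => i _; rewrite mxE eqxx.
Qed.

Lemma qform_orthodiag_delta (g : 'rV[R]_n) i :
  qform (U *m diag_mx g *m U^T) (U *m delta_mx i 0) = g 0 i.
Proof.
rewrite qform_orthodiag mulmxA UU mul1mx (bigD1 i) //= big1 => [|j ne].
  by rewrite !mxE !eqxx expr1n mulr1 addr0.
by rewrite !mxE (negbTE ne) expr0n mulr0.
Qed.

Lemma qform_orthodiag_le (g : 'rV[R]_n) x : (forall j, 0 <= g 0 j) ->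
  qform 1%:M x = 1 -> qform (U *m diag_mx g *m U^T) x <= \sum_j g 0 j.
Proof.
move=> g_ge0; rewrite orthodiag1 !qform_orthodiag => x_unit.
apply: ler_sum => j _; rewrite ler_piMr // -x_unit (bigD1 j) //= [const_mx _ _ _]mxE.
by rewrite mul1r lerDl sumr_ge0 // => k _; rewrite [const_mx _ _ _]mxE mul1r sqr_ge0.
Qed.

Lemma orthodiag_le_specnorm (g : 'rV[R]_n) i : g 0 i <= specnorm (U *m diag_mx g *m U^T).
Proof.
set K := U *m diag_mx g *m U^T.
have KtK : K^T *m K = U *m diag_mx (\row_j (g 0 j ^+ 2)) *m U^T.
  rewrite !trmx_mul trmxK tr_diag_mx !mulmxA -(mulmxA _ U^T U) UU mulmx1.
  rewrite -(mulmxA U (diag_mx g)); congr (_ *m _ *m _).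
  apply/matrixP => a b; rewrite mul_mx_diag !mxE; case: (eqVneq a b) => [->|ne].
    by rewrite !mulr1n expr2.
  by rewrite !mulr0n mul0r.
have Ue_unit : qform 1%:M (U *m delta_mx i 0) = 1.
  by rewrite orthodiag1 qform_orthodiag_delta mxE.
apply: le_trans (ler_norm (g 0 i)) _; rewrite -sqrtr_sqr.
have <- : qform (K^T *m K) (U *m delta_mx i 0) = g 0 i ^+ 2.
  by rewrite KtK qform_orthodiag_delta mxE.
set x := U *m delta_mx i 0 in Ue_unit *.
apply: sup_upper_bound; last by exists x.
split; first by exists (Num.sqrt (qform (K^T *m K) x)); exists x.
exists (Num.sqrt (\sum_j g 0 j ^+ 2)) => _ [z z_unit <-].
have sq_ge0 : 0 <= \sum_j g 0 j ^+ 2 by apply: sumr_ge0 => j _; exact: sqr_ge0.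
rewrite ler_sqrt // KtK (le_trans (qform_orthodiag_le _ z_unit)) // => [j|].
- by rewrite mxE sqr_ge0.
- by apply: ler_sum => j _; rewrite mxE.
Qed.

End Orthodiag.

Lemma specnorm0_le0 (R : realType) n : specnorm (0 : 'M[R]_n) <= 0.
Proof.
rewrite /specnorm; set S := (X in sup X).
have S0 y : S y -> y = 0.
  by move=> [x _ <-]; rewrite /qform trmx0 !mulmx0 mul0mx mxE sqrtr0.
have [S_ne|S_empty] := pselect (S !=set0); first by apply: ge_sup S_ne _ => y /S0 ->.
suff -> : S = set0 by rewrite sup0.
by apply/seteqP; split => y // Sy; apply: S_empty; exists y.
Qed.

Lemma sum_orthodiag_eq (R : realType) n (f : R -> R) (U V : 'M[R]_n) (g h : 'rV[R]_n) :
  U^T *m U = 1%:M -> V^T *m V = 1%:M -> U *m diag_mx g *m U^T = V *m diag_mx h *m V^T ->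
  \sum_i f (g 0 i) = \sum_i f (h 0 i).
Proof.
move=> UU VV gh; have := char_poly_orthodiag UU g.
rewrite gh (char_poly_orthodiag VV).
rewrite -(big_map (fun i => g 0 i) xpredT (fun x => 'X - x%:P)).
rewrite -(big_map (fun i => h 0 i) xpredT (fun x => 'X - x%:P)).
move=> /prod_XsubC_eq perm_gh.
rewrite -(big_map (fun i => g 0 i) xpredT f) -(big_map (fun i => h 0 i) xpredT f).
by rewrite (perm_big _ perm_gh).
Qed.

(* [mxfun] evaluates f along an arbitrary spectral decomposition picked by choice;
   its trace nevertheless only depends on the spectrum. *)
Lemma tr_mxfun_orthodiag (R : realType) n (f : R -> R) (U : 'M[R]_n) (g : 'rV[R]_n) :
  U^T *m U = 1%:M -> \tr (mxfun f (U *m diag_mx g *m U^T)) = \sum_i f (g 0 i).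
Proof.
move=> UU; rewrite /mxfun; case: pselect => [ex|]; last first.
  by move=> /(_ (ex_intro _ (U, g) (conj UU erefl))).
case: (cid ex) => [[V h] [/= VV gh]] /=.
rewrite mxtrace_mulC mulmxA VV mul1mx mxtrace_diag.
rewrite [LHS](eq_bigr (fun j => f (h 0 j))); last by move=> j _; rewrite mxE.
exact: sum_orthodiag_eq VV UU (esym gh).
Qed.

Lemma tr_mxfun_orthodiag_sub1 (R : realType) n (f : R -> R) (U : 'M[R]_n) (g : 'rV[R]_n) :
  U^T *m U = 1%:M -> \tr (mxfun f (U *m diag_mx g *m U^T) - 1%:M) = \sum_i (f (g 0 i) - 1).
Proof.
by move=> UU; rewrite raddfB /= mxtrace1 tr_mxfun_orthodiag // sumrB sumr_const card_ord.
Qed.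

Section RealSpectral.
Variable R : realType.

Lemma tr_col_mulE n (u v : 'cV[R]_n) : (u^T *m v) 0 0 = \sum_i u i 0 * v i 0.
Proof. by rewrite mxE; apply: eq_bigr => i _; rewrite mxE. Qed.

Lemma col_norm_eq0 n (w : 'cV[R]_n) : (w^T *m w) 0 0 = 0 -> w = 0.
Proof.
rewrite tr_col_mulE => /eqP; rewrite psumr_eq0 => [/allP w0|i _]; last first.
  by rewrite -expr2 sqr_ge0.
apply/matrixP => i j; rewrite (ord1 j) mxE.
by have := w0 i (mem_index_enum _); rewrite /= mulf_eq0 orbb => /eqP.
Qed.

Definition reflection n (w : 'cV[R]_n) : 'M[R]_n :=
  1%:M - (2 / (w^T *m w) 0 0) *: (w *m w^T).

Lemma reflection_sym n (w : 'cV[R]_n) : (reflection w)^T = reflection w.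
Proof. by rewrite /reflection linearB /= trmx1 linearZ /= trmx_mul trmxK. Qed.

Lemma reflection_invol n (w : 'cV[R]_n) : w != 0 -> reflection w *m reflection w = 1%:M.
Proof.
move=> w_neq0; set s : R := (w^T *m w) 0 0.
have s_neq0 : s != 0 by apply: contra w_neq0 => /eqP/col_norm_eq0 ->.
have wwww : w *m w^T *m (w *m w^T) = s *: (w *m w^T).
  by rewrite mulmxA -(mulmxA w) [w^T *m w]mx11_scalar mul_mx_scalar -scalemxAl.
rewrite /reflection mulmxBl !mulmxBr mul1mx mulmx1 -!scalemxAl -!scalemxAr wwww.
rewrite mul1mx !scalerA (_ : 2 / s * (2 / s) * s = 2 / s + 2 / s); last by field.
by rewrite scalerDl opprB addrK subrK.
Qed.

Lemma reflection_swap n (x e : 'cV[R]_n) : x^T *m x = 1%:M -> e^T *m e = 1%:M ->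
  x != e -> reflection (x - e) *m e = x.
Proof.
move=> xx ee x_neq_e; set c : R := (x^T *m e) 0 0.
have xe : x^T *m e = c%:M by rewrite [LHS]mx11_scalar.
have ex : e^T *m x = c%:M by rewrite -[e^T *m x]trmxK trmx_mul trmxK xe tr_scalar_mx.
have trB : (x - e)^T = x^T - e^T by rewrite linearB.
have ww : ((x - e)^T *m (x - e)) 0 0 = 2 - 2 * c.
  by rewrite trB mulmxBl !mulmxBr xx ee xe ex !mxE eqxx /= !mulr1n; lra.
have c_neq1 : 2 - 2 * c != 0.
  by rewrite -ww; apply: contra x_neq_e => /eqP/col_norm_eq0/eqP; rewrite subr_eq0.
have we : (x - e)^T *m e = (c - 1)%:M by rewrite trB mulmxBl xe ee raddfB.
rewrite /reflection mulmxBl mul1mx -scalemxAl -mulmxA we mul_mx_scalar scalerA ww.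
rewrite (_ : 2 / (2 - 2 * c) * (c - 1) = -1); last by field.
by rewrite scaleN1r opprK addrC subrK.
Qed.

Lemma unit_col_reflection n (x e : 'cV[R]_n) : x^T *m x = 1%:M -> e^T *m e = 1%:M ->
  exists H : 'M[R]_n, [/\ H^T = H, H *m H = 1%:M & H *m e = x].
Proof.
move=> xx ee; have [-> | x_neq_e] := eqVneq x e.
  by exists 1%:M; rewrite trmx1 !mul1mx.
exists (reflection (x - e)); split; first exact: reflection_sym.
  by apply: reflection_invol; rewrite subr_eq0.
exact: reflection_swap.
Qed.

Lemma symmetric_eigenvector n (A : 'M[R]_n.+1) : A^T = A ->
  exists a (v : 'rV[R]_n.+1), v != 0 /\ v *m A = a *: v.
Proof.
move=> A_sym; pose Ac := map_mx (real_complex R) A.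
have Ac_herm : Ac \is hermsymmx.
  apply: realsym_hermsym.
    by apply/is_hermitianmxP; rewrite expr0 scale1r map_mx_id // /Ac map_trmx A_sym.
  by apply/mxOverP => i j; rewrite mxE; apply/complex_realP; eexists.
have /orthomx_spectralP Ac_eq := hermitian_normalmx Ac_herm.
set P := spectralmx Ac in Ac_eq; set d := spectral_diag Ac in Ac_eq.
have P_unit : P \in unitmx by exact: spectral_unit.
have d0_eig : eigenvalue Ac (d 0 0).
  apply/eigenvalueP; exists (row 0 P).
    rewrite Ac_eq !mulmxA -row_mul mulmxV // -row_mul mul1mx.
    have -> : row 0 (diag_mx d) = d 0 0 *: row 0 (1%:M : 'M[R[i]]_n.+1).
      by apply/rowP => j; rewrite !mxE mulr_natr.
    by rewrite -scalemxAl -row_mul mul1mx.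
  apply/negP => /eqP /(congr1 (mulmx^~ (invmx P))).
  rewrite /= -row_mul mulmxV // mul0mx => /rowP/(_ 0); rewrite !mxE eqxx /=.
  by move=> /eqP; rewrite oner_eq0.
have d0_real : d 0 0 \is Num.real.
  exact: (mxOverP (hermitian_spectral_diag_real Ac_herm)).
move: d0_eig; rewrite eigenvalue_root_char -(RRe_real d0_real) /Ac -map_char_poly.
rewrite fmorph_root -eigenvalue_root_char => /eigenvalueP [v vA v_neq0].
by exists (complex.Re (d 0 0)), v.
Qed.

Lemma symmetric_unit_eigenvector n (A : 'M[R]_n.+1) : A^T = A ->
  exists a (x : 'cV[R]_n.+1), x^T *m x = 1%:M /\ A *m x = a *: x.
Proof.
move=> A_sym; have [a [v [v_neq0 vA]]] := symmetric_eigenvector A_sym.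
set s : R := (v *m v^T) 0 0.
have s_gt0 : 0 < s.
  rewrite lt_def; apply/andP; split.
    apply: contra v_neq0 => /eqP s0; apply/eqP/trmx_inj; rewrite trmx0.
    by apply: col_norm_eq0; rewrite trmxK.
  by rewrite /s mxE sumr_ge0 // => i _; rewrite mxE -expr2 sqr_ge0.
exists a, ((Num.sqrt s)^-1 *: v^T); split.
  rewrite [(_ *: v^T)^T]linearZ /= trmxK -scalemxAl -scalemxAr scalerA.
  rewrite [v *m v^T]mx11_scalar -/s.
  by rewrite scale_scalar_mx -invfM -expr2 sqr_sqrtr ?ltW // mulVf ?gt_eqF.
by rewrite -scalemxAr -{1}A_sym -trmx_mul vA [(_ *: v)^T]linearZ /= scalerA mulrC -scalerA.
Qed.

Lemma symmetric_block_eigen n (B : 'M[R]_(1 + n)) a : B^T = B ->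
  B *m delta_mx 0 0 = a *: (delta_mx 0 0 : 'cV_(1 + n)) ->
  B = block_mx a%:M 0 0 (drsubmx B).
Proof.
move=> B_sym Be; have Bi0 i : B i 0 = a * (i == 0)%:R.
  have /matrixP/(_ i 0) := Be; rewrite !mxE andbT => <-.
  rewrite (bigD1 0) //= big1 => [|j ne]; first by rewrite !mxE eqxx mulr1 addr0.
  by rewrite !mxE (negbTE ne) mulr0.
have l0 (i : 'I_1) : lshift n i = 0 by apply/val_inj; rewrite /= (ord1 i).
have r0 (i : 'I_n) : (rshift 1 i == 0) = false by [].
rewrite -[B in LHS]submxK; congr block_mx; apply/matrixP => i j; rewrite !mxE.
- by rewrite (ord1 i) (ord1 j) l0 Bi0 eqxx mulr1.
- by rewrite -B_sym mxE l0 Bi0 r0 mulr0.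
- by rewrite l0 Bi0 r0 mulr0.
Qed.

Lemma orthodiag_conj n (Q A W : 'M[R]_n) (g : 'rV[R]_n) :
  Q^T *m Q = 1%:M -> W^T *m W = 1%:M -> Q^T *m A *m Q = W *m diag_mx g *m W^T ->
  (Q *m W)^T *m (Q *m W) = 1%:M /\ A = Q *m W *m diag_mx g *m (Q *m W)^T.
Proof.
move=> QQ WW QAQ; have QQt := mulmx1C QQ; rewrite trmx_mul; split.
  by rewrite mulmxA -(mulmxA W^T) QQ mulmx1.
have -> : Q *m W *m diag_mx g *m (W^T *m Q^T) = Q *m (W *m diag_mx g *m W^T) *m Q^T.
  by rewrite !mulmxA.
by rewrite -QAQ !mulmxA QQt mul1mx -mulmxA QQt mulmx1.
Qed.

Lemma orthodiag_block n a (V : 'M[R]_n) (h : 'rV[R]_n) : V^T *m V = 1%:M ->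
  let W : 'M[R]_(1 + n) := block_mx 1%:M 0 0 V in
  W^T *m W = 1%:M /\
  W *m diag_mx (row_mx a%:M h) *m W^T = block_mx a%:M 0 0 (V *m diag_mx h *m V^T).
Proof.
move=> VV W; rewrite /W (tr_block_mx (1%:M : 'M[R]_1)) !trmx0 trmx1 diag_mx_row; split.
  by rewrite mulmx_block !mulmx0 !mul0mx !addr0 !add0r mulmx1 VV -scalar_mx_block.
rewrite !mulmx_block !mulmx0 !mul0mx !addr0 !add0r !mul1mx !mulmx1.
congr block_mx; last exact: mul0mx.
by apply/matrixP => i j; rewrite (ord1 i) (ord1 j) !mxE.
Qed.

(* Induction on the size: a Householder reflection H sending e_0 to a unit
   eigenvector of A makes H A H block diagonal. *)
Theorem symmetric_orthodiag n (A : 'M[R]_n) : A^T = A ->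
  exists (U : 'M[R]_n) (g : 'rV[R]_n), U^T *m U = 1%:M /\ A = U *m diag_mx g *m U^T.
Proof.
elim: n A => [|n IH] A A_sym.
  by exists 1%:M, 0; rewrite trmx1 mul1mx; split => //; apply/matrixP => -[].
have [a [x [xx Ax]]] := symmetric_unit_eigenvector A_sym.
set e : 'cV[R]_n.+1 := delta_mx 0 0.
have ee : e^T *m e = 1%:M.
  by rewrite trmx_delta mul_delta_mx; apply/matrixP => i j; rewrite (ord1 i) (ord1 j) !mxE.
have [H [H_sym HH He]] := unit_col_reflection xx ee.
have HHt : H^T *m H = 1%:M by rewrite H_sym.
set B : 'M[R]_(1 + n) := H^T *m A *m H.
have B_sym : B^T = B by rewrite /B !trmx_mul trmxK A_sym mulmxA.
have Be : B *m e = a *: e.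
  by rewrite /B -!mulmxA He Ax -scalemxAr -He mulmxA HHt mul1mx.
have B'_sym : (drsubmx B)^T = drsubmx B by rewrite trmx_drsub B_sym.
have [V [h [VV B'_eq]]] := IH _ B'_sym.
have [WW W_eq] := orthodiag_block a h VV.
set W : 'M[R]_(1 + n) := block_mx 1%:M 0 0 V in WW W_eq.
have HAH : H^T *m A *m H = W *m diag_mx (row_mx a%:M h) *m W^T.
  by rewrite W_eq -B'_eq -symmetric_block_eigen.
exists (H *m W), (row_mx a%:M h).
exact: orthodiag_conj HHt WW HAH.
Qed.

End RealSpectral.

Lemma ln_prod (R : realType) (I : finType) (g : I -> R) : (forall j, 0 < g j) ->
  ln (\prod_j g j) = \sum_j ln (g j).
Proof.
move=> g_gt0; apply: (proj2 (big_rec2 (fun p s => 0 < p /\ ln p = s) _ _)).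
  by rewrite ln1.
by move=> i p s _ [p_gt0 <-]; rewrite mulr_gt0 // lnM ?posrE.
Qed.

Lemma Hfin_orthodiag (R : realType) n tau (m : 'cV[R]_n) (U : 'M[R]_n) (g : 'rV[R]_n) lam :
  U^T *m U = 1%:M -> 0 < lam -> (forall j, (1 - tau) * g 0 j < lam) ->
  Hfin tau m (U *m diag_mx g *m U^T) lam =
    \sum_j tau_term tau (g 0 j) lam ((U^T *m m) j 0).
Proof.
move=> UU lam_gt0 dom; set G := \row_j (1 - (1 - tau) * (g 0 j / lam)).
have G_gt0 j : 0 < G 0 j by rewrite mxE subr_gt0 mulrA ltr_pdivrMr // mul1r.
have G_neq0 j : G 0 j != 0 by rewrite gt_eqF.
have IK : 1%:M - ((1 - tau) / lam) *: (U *m diag_mx g *m U^T) = U *m diag_mx G *m U^T.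
  rewrite -scaleNr orthodiag_affine //; congr (_ *m diag_mx _ *m _).
  by apply/rowP => j; rewrite !mxE; ring.
rewrite /Hfin /tau_term /tau_phi; case: (eqVneq tau 0) => [tau0|tau0].
  move: IK; rewrite tau0 subr0 div1r => ->.
  rewrite invmx_orthodiag // qform_orthodiag det_orthodiag //.
  rewrite (@ln_prod _ _ (fun j => G 0 j)) // mulr_sumr -sumrB.
  by apply: eq_bigr => j _; rewrite !mxE tau0 subr0 !mul1r mulrN.
case: (eqVneq tau 1) => [tau1|tau1].
  rewrite [in qform _ m](orthodiag1 UU) qform_orthodiag orthodiag_scale.
  rewrite (tr_mxfun_orthodiag_sub1 _ _ UU).
  rewrite mulr_sumr -big_split; apply: eq_bigr => j _.
  rewrite [const_mx _ _ _]mxE [in expR _]mxE tau1 subrr mul0r subr0 invr1.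
  by rewrite !mul1r (mulrC lam^-1).
rewrite IK invmx_orthodiag // qform_orthodiag tr_mxfun_orthodiag_sub1 //.
rewrite mulr_sumr -big_split; apply: eq_bigr => j _.
by rewrite !mxE mulrAC -mulrA.
Qed.

Section TauEntropyOrthodiag.
Variables (R : realType) (n : nat) (tau : R) (m : 'cV[R]_n) (U : 'M[R]_n) (g : 'rV[R]_n).
Hypotheses (tau_ge0 : 0 <= tau) (tau_le1 : tau <= 1).
Hypotheses (UU : U^T *m U = 1%:M) (g_ge0 : forall j, 0 <= g 0 j).

Let K := U *m diag_mx g *m U^T.
Let y j := (U^T *m m) j 0.

Let dom_eig lam : (1 - tau) * specnorm K < lam -> forall j, (1 - tau) * g 0 j < lam.
Proof.
by move=> dom j; apply: le_lt_trans dom; rewrite ler_wpM2l ?subr_ge0 ?orthodiag_le_specnorm.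
Qed.

Lemma Htau_orthodiag lam : 0 < lam -> (1 - tau) * specnorm K < lam ->
  Htau tau m K lam = (\sum_j tau_term tau (g 0 j) lam (y j))%:E.
Proof.
by move=> lam_gt0 dom; rewrite /Htau lam_gt0 dom /= Hfin_orthodiag // => j; apply: dom_eig.
Qed.

Lemma Htau_orthodiag_ge0 lam : (0 <= Htau tau m K lam)%E.
Proof.
rewrite /Htau; case: ifPn => [/andP[lam_gt0 dom]|_]; last exact: leey.
rewrite lee_fin Hfin_orthodiag // => [|j]; last exact: dom_eig.
by apply: sumr_ge0 => j _; apply: tau_term_ge0 => //; apply: dom_eig.
Qed.

Lemma Htau_orthodiag_eq0 lam : 0 < lam -> Htau tau m K lam = 0%E <-> m = 0 /\ K = 0.
Proof.
move=> lam_gt0; split.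
  rewrite /Htau lam_gt0; case: ifPn => //= dom [].
  rewrite Hfin_orthodiag // => [/eqP|j]; last exact: dom_eig.
  rewrite psumr_eq0 => [/allP terms0|j _]; last first.
    by apply: tau_term_ge0 => //; apply: dom_eig.
  have {}terms0 j : g 0 j = 0 /\ y j = 0.
    by apply: tau_term_eq0 (dom_eig dom j) _ => //; apply/eqP/terms0/mem_index_enum.
  have g0 : g = 0 by apply/rowP => j; rewrite (terms0 j).1 mxE.
  have Utm0 : U^T *m m = 0.
    by apply/matrixP => j k; rewrite (ord1 k) [RHS]mxE; exact: (terms0 j).2.
  by rewrite /K g0 linear0 mulmx0 mul0mx -[m]mul1mx -(mulmx1C UU) -mulmxA Utm0 mulmx0.
move=> [m0 K0]; have dom : (1 - tau) * specnorm K < lam.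
  by rewrite K0 (le_lt_trans _ lam_gt0) // mulr_ge0_le0 ?subr_ge0 ?specnorm0_le0.
rewrite Htau_orthodiag // big1 // => j _.
have -> : g 0 j = 0 by rewrite -(qform_orthodiag_delta UU) -/K K0 /qform mulmx0 mul0mx mxE.
by rewrite /y m0 mulmx0 mxE tau_term0.
Qed.

Lemma Htau_orthodiag_antitone l1 l2 : l1 <= l2 -> (Htau tau m K l2 <= Htau tau m K l1)%E.
Proof.
move=> l12.
have [/andP[l1_gt0 dom1]|out1] := boolP ((0 < l1) && ((1 - tau) * specnorm K < l1)).
  have l2_gt0 := lt_le_trans l1_gt0 l12; have dom2 := lt_le_trans dom1 l12.
  rewrite !Htau_orthodiag // lee_fin; apply: ler_sum => j _.
  exact: tau_term_antitone (dom_eig dom1 j).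
by rewrite {2}/Htau (negbTE out1) leey.
Qed.

End TauEntropyOrthodiag.

Theorem proposition3 (R : realType) (n : nat) (tau : R)
  (m : 'cV[R]_n) (K : 'M[R]_n) :
  0 <= tau <= 1 -> psd K ->
  (* (i) nonnegativity, with equality iff e = 0 *)
  ((forall lam : R, (0 <= Htau tau m K lam)%E) /\
   (forall lam : R, 0 < lam -> (Htau tau m K lam = 0%E <-> (m = 0 /\ K = 0)))) /\
  (* (ii) lambda |-> H_tau(e, lambda) is monotone (non-)increasing *)
  (forall lam1 lam2 : R, lam1 <= lam2 -> (Htau tau m K lam2 <= Htau tau m K lam1)%E).
Proof.
move=> /andP[tau_ge0 tau_le1] [K_sym K_psd].
have [U [g [UU Kd]]] := symmetric_orthodiag K_sym.
have g_ge0 j : 0 <= g 0 j by rewrite -(qform_orthodiag_delta UU) -Kd.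
subst K; split; [split|].
- exact: Htau_orthodiag_ge0.
- exact: Htau_orthodiag_eq0.
- exact: Htau_orthodiag_antitone.
Qed.
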